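(* For every $\mu\in\mathbb{R}$, the Sprott vector field satisfies on $\mathbb{R}^3\setminus\Delta$ $$-0.41\rho-w-\tfrac{\sqrt3}{2}\le d\theta(f_\mu)\le0.41\rho-w-\tfrac{\sqrt3}{2},$$ where $w:=(x+y+z)/\sqrt3$ and $\rho:=\|\mathbf{x}_\perp\|$.
   Context: The Sprott vector field $f_\mu$ on $\mathbb{R}^3$ is $\dot x=y^2-z-\mu x$, $\dot y=z^2-x-\mu y$, $\dot z=x^2-y-\mu z$. $\Delta:=\mathrm{span}\{(1,1,1)\}$; $\mathbf{x}_\perp$ is the orthogonal projection of $\mathbf{x}=(x,y,z)$ onto $\Delta^\perp$, with $\|\mathbf{x}_\perp\|^2=\tfrac23(x^2+y^2+z^2-xy-yz-zx)$; $d\theta:=\frac{1}{\sqrt3}\frac{(z-y)dx+(x-z)dy+(y-x)dz}{\|\mathbf{x}_\perp\|^2}$ on $\mathbb{R}^3\setminus\Delta$. *)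

From Stdlib Require Import Reals.
Open Scope R_scope.

Definition sprott_x (mu x y z : R) : R := y ^ 2 - z - mu * x.
Definition sprott_y (mu x y z : R) : R := z ^ 2 - x - mu * y.
Definition sprott_z (mu x y z : R) : R := x ^ 2 - y - mu * z.

Definition on_diag (x y z : R) : Prop := x = y /\ y = z.

(* ||x_perp||^2 *)
Definition perp_sq (x y z : R) : R :=
  2 / 3 * (x ^ 2 + y ^ 2 + z ^ 2 - x * y - y * z - z * x).

Definition rho (x y z : R) : R := sqrt (perp_sq x y z).

Definition wcoord (x y z : R) : R := (x + y + z) / sqrt 3.

(* the 1-form d theta at (x,y,z) applied to a vector (vx,vy,vz) *)
Definition dtheta (x y z vx vy vz : R) : R :=
  / sqrt 3 * (((z - y) * vx + (x - z) * vy + (y - x) * vz) / perp_sq x y z).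

Definition dtheta_f (mu x y z : R) : R :=
  dtheta x y z (sprott_x mu x y z) (sprott_y mu x y z) (sprott_z mu x y z).

From Stdlib Require Import Reals Lra Psatz.
Open Scope R_scope.

(* Write P := perp_sq x y z = rho^2 and w := wcoord x y z.
   1. The numerator (z-y) f_1 + (x-z) f_2 + (y-x) f_3 of d theta (f_mu) does
      not depend on mu (the linear damping -mu x is radial, orthogonal to the
      rotation direction); it equals  -(3/2) P - (x+y+z) P + E  for the cubic
      form E := x^2 y + y^2 z + z^2 x - (x^3+y^3+z^3)/3 - 2xyz.  Dividing by
      sqrt 3 * P gives the exact decomposition
         d theta (f_mu) = - w - sqrt 3 / 2 + E / (sqrt 3 * P).
   2. The cubic E is controlled by the perpendicular norm:  P^3/2 - E^2 is
      (1/27 of) a perfect square, so E^2 <= P^3/2.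
   3. Hence (E / (sqrt 3 P))^2 <= P/6 <= (41/100)^2 P = (41/100 * rho)^2,
      i.e. |E / (sqrt 3 P)| <= 0.41 rho, and the theorem follows from 1.
   Off the diagonal P > 0, which makes every division legitimate. *)

Lemma perp_sq_gaps (x y z : R) :
  perp_sq x y z = ((x - y) ^ 2 + (y - z) ^ 2 + (z - x) ^ 2) / 3.
Proof. unfold perp_sq; field. Qed.

Lemma perp_sq_pos (x y z : R) : ~ on_diag x y z -> 0 < perp_sq x y z.
Proof.
  intros off_diag; rewrite perp_sq_gaps.
  assert (gap : x - y <> 0 \/ y - z <> 0).
  { destruct (Req_dec x y), (Req_dec y z); try (left; lra); try (right; lra).
    exfalso; apply off_diag; split; assumption. }
  pose proof (pow2_ge_0 (x - y)); pose proof (pow2_ge_0 (y - z));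
    pose proof (pow2_ge_0 (z - x)).
  destruct gap as [gap | gap]; pose proof (Rsqr_pos_lt _ gap);
    unfold Rsqr in *; simpl in *; lra.
Qed.

Definition rotation_cubic (x y z : R) : R :=
  x ^ 2 * y + y ^ 2 * z + z ^ 2 * x - (x ^ 3 + y ^ 3 + z ^ 3) / 3 - 2 * x * y * z.

Lemma dtheta_numerator (mu x y z : R) :
  (z - y) * sprott_x mu x y z + (x - z) * sprott_y mu x y z
    + (y - x) * sprott_z mu x y z
  = - (3 / 2) * perp_sq x y z - (x + y + z) * perp_sq x y z + rotation_cubic x y z.
Proof. unfold sprott_x, sprott_y, sprott_z, rotation_cubic, perp_sq; field. Qed.

Lemma dtheta_f_decomposition (mu x y z : R) :
  perp_sq x y z <> 0 ->
  dtheta_f mu x y z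
  = - wcoord x y z - sqrt 3 / 2 + rotation_cubic x y z / (sqrt 3 * perp_sq x y z).
Proof.
  intros P_nz.
  assert (q_pos : 0 < sqrt 3) by (apply sqrt_lt_R0; lra).
  assert (q_sq : sqrt 3 * sqrt 3 = 3) by (apply sqrt_sqrt; lra).
  unfold dtheta_f, dtheta, wcoord; rewrite dtheta_numerator.
  set (q := sqrt 3) in *.
  replace (q / 2) with (3 / 2 / q) by (rewrite <- q_sq; field; lra).
  field; split; lra.
Qed.

(* The cubic is dominated by the perpendicular norm: E^2 <= P^3 / 2,
   because 27 (P^3/2 - E^2) is the square of a cubic in the gaps. *)
Lemma rotation_cubic_sq_le (x y z : R) :
  rotation_cubic x y z ^ 2 <= perp_sq x y z ^ 3 / 2.
Proof.
  set (s := (x - z) ^ 3 + 3 * (x - z) ^ 2 * (y - z) - 6 * (x - z) * (y - z) ^ 2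
            + (y - z) ^ 3).
  assert (square : 27 * (perp_sq x y z ^ 3 / 2 - rotation_cubic x y z ^ 2) = s ^ 2)
    by (unfold s, perp_sq, rotation_cubic; field).
  pose proof (pow2_ge_0 s); lra.
Qed.

(* Any quantity with E^2 <= P^3/2 satisfies |E / (sqrt 3 P)| <= 0.41 sqrt P,
   since 1/6 < 0.41^2. *)
Lemma scaled_cubic_bound (E P : R) :
  0 < P -> E ^ 2 <= P ^ 3 / 2 ->
  - (41 / 100 * sqrt P) <= E / (sqrt 3 * P) <= 41 / 100 * sqrt P.
Proof.
  intros P_pos E_sq.
  assert (q_pos : 0 < sqrt 3) by (apply sqrt_lt_R0; lra).
  assert (q_sq : sqrt 3 * sqrt 3 = 3) by (apply sqrt_sqrt; lra).
  assert (r_sq : sqrt P * sqrt P = P) by (apply sqrt_sqrt; lra).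
  assert (bound_nonneg : 0 <= 41 / 100 * sqrt P)
    by (pose proof (sqrt_pos P); lra).
  assert (sq_le : (E / (sqrt 3 * P))² <= (41 / 100 * sqrt P)²).
  { assert (lhs : (E / (sqrt 3 * P))² = E ^ 2 / (3 * P ^ 2)).
    { unfold Rsqr; set (q := sqrt 3) in *; rewrite <- q_sq; field; lra. }
    assert (rhs : (41 / 100 * sqrt P)² = 1681 / 10000 * (sqrt P * sqrt P))
      by (unfold Rsqr; field).
    rewrite lhs, rhs, r_sq.
    apply (Rmult_le_reg_r (3 * P ^ 2)); [nra |].
    unfold Rdiv; rewrite Rmult_assoc, Rinv_l, Rmult_1_r by nra.
    nra. }
  split; [apply Rsqr_neg_pos_le_0 | apply Rsqr_incr_0_var]; assumption.
Qed.

Theorem lemma9 (mu x y z : R) (hx : ~ on_diag x y z) :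
  - (41 / 100) * rho x y z - wcoord x y z - sqrt 3 / 2 <= dtheta_f mu x y z /\
  dtheta_f mu x y z <= (41 / 100) * rho x y z - wcoord x y z - sqrt 3 / 2.
Proof.
  pose proof (perp_sq_pos x y z hx) as P_pos.
  rewrite (dtheta_f_decomposition mu x y z) by lra.
  pose proof (scaled_cubic_bound _ _ P_pos (rotation_cubic_sq_le x y z)) as bound.
  unfold rho; lra.
Qed.
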